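(* Let $1 \to \mathbf{Z} \to \mathbf{G} \xrightarrow{\pi} \mathbf{H} \to 1$ be a short exact sequence of groups (so $\mathbf{Z} = \ker\pi$ and $\pi$ is surjective), and let $\Delta$ be a poset with a bottom element $O$. Let $\Pi \colon \mathbf{G}^{\Delta} \to \mathbf{H}^{\Delta}$ be the functor induced by $\pi$, and let $\widetilde{\mathbf{H}^{\Delta}}$ be a subcategory of $\mathbf{H}^{\Delta}$ containing all objects of $\mathbf{H}^{\Delta}$ such that every hom-set $\mathrm{Hom}_{\widetilde{\mathbf{H}^{\Delta}}}(U,V)$ consists of exactly one morphism (in particular every endomorphism monoid in $\widetilde{\mathbf{H}^{\Delta}}$ is trivial). Let $\widetilde{\mathbf{G}^{\Delta}}$ be the pull-back of $\Pi$ along the inclusion $\iota \colon \widetilde{\mathbf{H}^{\Delta}} \to \mathbf{H}^{\Delta}$. Then for any objects $U$ and $V$ of $\widetilde{\mathbf{G}^{\Delta}}$, the map $\eta \mapsto \eta_O$ is a bijection from the hom-set $\mathrm{Hom}_{\widetilde{\mathbf{G}^{\Delta}}}(U,V)$ onto a coset of $\mathbf{Z}$ in $\mathbf{G}$.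
   Context: Groups are regarded as single-object categories whose morphisms are the group elements; a poset is a category with one morphism $x \to y$ iff $x \le y$, and a bottom element $O$ satisfies $O\le x$ for all $x$. For a group $\mathbf{K}$, $\mathbf{K}^{\Delta}$ is the category of functors $\Delta \to \mathbf{K}$ and natural transformations; a natural transformation $\eta\colon F\to F'$ in $\mathbf{G}^{\Delta}$ is determined by its component $\eta_O\in\mathbf{G}$, which can be any element of $\mathbf{G}$. The functor $\Pi$ sends an object $F$ to $\pi \circ F$ and a morphism $\eta$ to the natural transformation $\pi\eta$ with components $\pi(\eta_x)$ (the paper describes $\Pi$ as ''the identity on objects'', identifying $F$ with $\pi\circ F$). Concretely, $\widetilde{\mathbf{G}^{\Delta}}$ is the category whose objects are the objects $F$ of $\mathbf{G}^{\Delta}$ and whose morphisms $F \to F'$ are the natural transformations $\eta \colon F \to F'$ in $\mathbf{G}^{\Delta}$ such that $\Pi(\eta)$ is a morphism of $\widetilde{\mathbf{H}^{\Delta}}$. *)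

Set Implicit Arguments.

(* A group, with composition written gmul; regarded as a one-object category
   whose morphisms are the elements, composition g o f := gmul g f. *)
Record Group := {
  gcar :> Type;
  gmul : gcar -> gcar -> gcar;
  gone : gcar;
  ginv : gcar -> gcar;
  gmulA : forall x y z, gmul x (gmul y z) = gmul (gmul x y) z;
  gmul1l : forall x, gmul gone x = x;
  gmul1r : forall x, gmul x gone = x;
  gmulVl : forall x, gmul (ginv x) x = gone;
  gmulVr : forall x, gmul x (ginv x) = gone
}.
Arguments gmul {g}.
Arguments gone {g}.
Arguments ginv {g}.

Definition is_group_hom {G H : Group} (pi : G -> H) : Prop :=
  forall x y, pi (gmul x y) = gmul (pi x) (pi y).

(* A poset, regarded as a category with a (unique) morphism x -> y iff x <= y. *)
Record Poset := {
  pcar :> Type;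
  ple : pcar -> pcar -> Prop;
  ple_refl : forall x, ple x x;
  ple_antisym : forall x y, ple x y -> ple y x -> x = y;
  ple_trans : forall x y z, ple x y -> ple y z -> ple x z
}.
Arguments ple {p}.

Record Functor (D : Poset) (K : Group) := {
  fmap : forall x y : D, ple x y -> K;
  fmap_id : forall (x : D) (p : ple x x), fmap x x p = gone;
  fmap_comp : forall (x y z : D) (p : ple x y) (q : ple y z) (r : ple x z),
      fmap x z r = gmul (fmap y z q) (fmap x y p)
}.
Arguments fmap {D K}.

Definition is_nat (D : Poset) (K : Group) (F F' : Functor D K) (eta : D -> K)
  : Prop :=
  forall (x y : D) (p : ple x y),
    gmul (eta y) (fmap F x y p) = gmul (fmap F' x y p) (eta x).

Lemma hom_one (G H : Group) (pi : G -> H) :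
  is_group_hom pi -> pi gone = gone.
Proof.
  intros h.
  assert (E : gmul (pi gone) (pi gone) = gmul (pi gone) gone).
  { rewrite <- h, gmul1l, gmul1r. reflexivity. }
  assert (E2 := f_equal (gmul (ginv (pi gone))) E).
  rewrite !gmulA, gmulVl, !gmul1l in E2. exact E2.
Qed.

Definition PiF (D : Poset) (G H : Group) (pi : G -> H) (hpi : is_group_hom pi)
  (F : Functor D G) : Functor D H.
Proof.
  refine {| fmap := fun x y p => pi (fmap F x y p) |}.
  - intros x p. rewrite fmap_id. exact (hom_one hpi).
  - intros x y z p q r. rewrite (fmap_comp F x y z p q r). apply hpi.
Defined.

(* A subcategory of H^D containing all objects: a predicate on (component
   functions of) morphisms, consisting of natural transformations, containing
   identities and closed under composition. *)
Record Subcat (D : Poset) (K : Group) := {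
  smor : forall U V : Functor D K, (D -> K) -> Prop;
  smor_nat : forall U V eta, smor U V eta -> is_nat U V eta;
  smor_id : forall U, smor U U (fun _ => gone);
  smor_comp : forall U V W a b, smor U V a -> smor V W b ->
      smor U W (fun x => gmul (b x) (a x))
}.
Arguments smor {D K}.

(* Morphisms U -> V of the pull-back tilde(G^D): natural transformations eta
   in G^D with Pi(eta) a morphism of the subcategory S. *)
Definition tG_hom (D : Poset) (G H : Group) (pi : G -> H)
  (hpi : is_group_hom pi) (S : Subcat D H) (U V : Functor D G) (eta : D -> G)
  : Prop :=
  is_nat U V eta /\ smor S (PiF hpi U) (PiF hpi V) (fun x => pi (eta x)).

(** A natural transformation out of a diagram indexed by a poset with bottom
    element [O] is determined by its component at [O], and every element of
    the group occurs as such a component: [eta x = V(O,x) eta_O U(O,x)^-1].  Since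
    the hom-sets of the subcategory of [H^D] are singletons [{theta}], a
    morphism [eta] of [G^D] lies in the pull-back exactly when
    [pi eta_O = theta_O], i.e. when [eta_O] lies in the fibre of [pi] over
    [theta_O], which is a coset of [ker pi]. *)

From Stdlib Require Import FunctionalExtensionality.

Set Implicit Arguments.

Section GroupFacts.
Variable K : Group.

Lemma gmulKg (a b : K) : gmul (ginv a) (gmul a b) = b.
Proof. rewrite gmulA, gmulVl, gmul1l. reflexivity. Qed.

Lemma gmulgK (a b : K) : gmul (gmul a b) (ginv b) = a.
Proof. rewrite <- gmulA, gmulVr, gmul1r. reflexivity. Qed.

Lemma ginv_unique (a b : K) : gmul a b = gone -> ginv a = b.
Proof. intro E. rewrite <- (gmul1r _ (ginv a)), <- E, gmulKg. reflexivity. Qed.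

Lemma ginv_one : ginv (@gone K) = gone.
Proof. apply ginv_unique, gmul1l. Qed.

Lemma ginv_mul (a b : K) : ginv (gmul a b) = gmul (ginv b) (ginv a).
Proof.
  apply ginv_unique.
  rewrite <- gmulA, (gmulA _ b), gmulVr, gmul1l, gmulVr. reflexivity.
Qed.

End GroupFacts.

Section GroupHomFacts.
Variables (G H : Group) (pi : G -> H) (hpi : is_group_hom pi).

Lemma hom_inv (a : G) : pi (ginv a) = ginv (pi a).
Proof.
  symmetry. apply ginv_unique. rewrite <- hpi, gmulVr. exact (hom_one hpi).
Qed.

Lemma hom_eq_coset (g a : G) :
  pi a = pi g <-> exists z : G, pi z = gone /\ a = gmul g z.
Proof.
  split.
  - intro E. exists (gmul (ginv g) a). split.
    + rewrite hpi, hom_inv, E, gmulVl. reflexivity.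
    + rewrite gmulA, gmulVr, gmul1l. reflexivity.
  - intros [z [Hz ->]]. rewrite hpi, Hz, gmul1r. reflexivity.
Qed.

Lemma is_nat_comp_hom (D : Poset) (U V : Functor D G) (eta : D -> G) :
  is_nat U V eta -> is_nat (PiF hpi U) (PiF hpi V) (fun x => pi (eta x)).
Proof. intros Heta x y p. cbn. rewrite <- !hpi, Heta. reflexivity. Qed.

End GroupHomFacts.

Section NatFromBottom.
Variables (D : Poset) (K : Group) (O : D) (hO : forall x : D, ple O x).
Variables U V : Functor D K.

Definition nat_from_bottom (c : K) (x : D) : K :=
  gmul (gmul (fmap V O x (hO x)) c) (ginv (fmap U O x (hO x))).

Lemma nat_from_bottomO (c : K) : nat_from_bottom c O = c.
Proof.
  unfold nat_from_bottom. rewrite !fmap_id, ginv_one, gmul1l, gmul1r.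
  reflexivity.
Qed.

Lemma is_nat_from_bottom (c : K) : is_nat U V (nat_from_bottom c).
Proof.
  intros x y p. unfold nat_from_bottom.
  rewrite (fmap_comp U O x y (hO x) p (hO y)).
  rewrite (fmap_comp V O x y (hO x) p (hO y)).
  rewrite ginv_mul, <- gmulA, <- (gmulA _ (ginv _)), gmulVl, gmul1r.
  rewrite !gmulA. reflexivity.
Qed.

Lemma is_nat_from_bottom_eq (eta : D -> K) :
  is_nat U V eta -> forall x, eta x = nat_from_bottom (eta O) x.
Proof.
  intros Heta x. unfold nat_from_bottom.
  rewrite <- (Heta O x (hO x)), gmulgK. reflexivity.
Qed.

Lemma is_nat_eq_at_bottom (eta eta' : D -> K) :
  is_nat U V eta -> is_nat U V eta' -> eta O = eta' O ->
  forall x, eta x = eta' x.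
Proof.
  intros Heta Heta' E x.
  rewrite (is_nat_from_bottom_eq Heta), (is_nat_from_bottom_eq Heta'), E.
  reflexivity.
Qed.

End NatFromBottom.

Section PullbackHoms.
Variables (G H : Group) (pi : G -> H) (hpi : is_group_hom pi).
Variables (D : Poset) (O : D) (hO : forall x : D, ple O x) (S : Subcat D H).
Variables (U V : Functor D G) (theta : D -> H).
Hypothesis theta_mor : smor S (PiF hpi U) (PiF hpi V) theta.
Hypothesis theta_unique :
  forall eta, smor S (PiF hpi U) (PiF hpi V) eta -> forall x, eta x = theta x.

Lemma tG_hom_iff (eta : D -> G) :
  tG_hom hpi S U V eta <-> is_nat U V eta /\ pi (eta O) = theta O.
Proof.
  split.
  - intros [Heta Hmor]. split; [exact Heta | exact (theta_unique _ Hmor O)].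
  - intros [Heta HO]. split; [exact Heta |].
    replace (fun x => pi (eta x)) with theta; [exact theta_mor |].
    apply functional_extensionality.
    apply (is_nat_eq_at_bottom O hO (smor_nat S _ _ _ theta_mor)).
    + exact (is_nat_comp_hom hpi Heta).
    + symmetry. exact HO.
Qed.

End PullbackHoms.

Theorem proposition4 (G H : Group) (pi : G -> H) (hpi : is_group_hom pi)
  (pi_surj : forall h : H, exists g : G, pi g = h)
  (D : Poset) (O : D) (hO : forall x : D, ple O x)
  (S : Subcat D H)
  (S_single : forall U V : Functor D H,
      exists eta, smor S U V eta /\
        (forall eta', smor S U V eta' -> forall x, eta' x = eta x))
  (U V : Functor D G) :
  exists g : G,
    (* the image of eta |-> eta_O lies in the coset g Z, Z = ker pi *)
    (forall eta, tG_hom hpi S U V eta ->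
       exists z : G, pi z = gone /\ eta O = gmul g z) /\
    (* ... and is all of g Z *)
    (forall z : G, pi z = gone ->
       exists eta, tG_hom hpi S U V eta /\ eta O = gmul g z) /\
    (* the map eta |-> eta_O is injective *)
    (forall eta eta', tG_hom hpi S U V eta -> tG_hom hpi S U V eta' ->
       eta O = eta' O -> forall x, eta x = eta' x).
Proof.
  destruct (S_single (PiF hpi U) (PiF hpi V)) as [theta [Htheta Huniq]].
  pose proof (tG_hom_iff hpi O hO S _ _ _ Htheta Huniq) as Hiff.
  destruct (pi_surj (theta O)) as [g Hg].
  exists g. split; [| split].
  - intros eta [_ HO]%Hiff. apply (hom_eq_coset hpi). rewrite HO, Hg.
    reflexivity.
  - intros z Hz. exists (nat_from_bottom O hO U V (gmul g z)).
    rewrite nat_from_bottomO. split; [| reflexivity].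
    apply Hiff. rewrite nat_from_bottomO, <- Hg. split.
    + apply is_nat_from_bottom.
    + apply (hom_eq_coset hpi). exists z. split; [exact Hz | reflexivity].
  - intros eta eta' [Heta _]%Hiff [Heta' _]%Hiff.
    exact (is_nat_eq_at_bottom O hO Heta Heta').
Qed.
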